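(* Let $\{(\bm x_j,y_j)\}_{j=1}^N\subseteq\mathbb{R}^P\times\{0,1\}$ and thresholds $0=p_0<p_1<\cdots<p_M<1$. Let $\bm\rho\in\mathbb{R}^P\setminus\{0\}$ and $\bm t=(t_0,\dots,t_M)\in\mathbb{R}^{M+1}$ satisfy $-\max_j|\bm x_j\bm\rho|\le t_0\le t_1\le\cdots\le t_M\le\max_j|\bm x_j\bm\rho|$. Let $\|X\|_\infty=\max_{1\le j\le N}\|\bm x_j\|_1$ and $\gamma_{\min}=\frac{\min_{i,j}|\bm x_j\bm\rho-t_i|}{\|\bm\rho\|_\infty}$ (minimum over $0\le i\le M$, $1\le j\le N$). Let $\Lambda$ and $T_{\max}$ be positive integers. If $\gamma_{\min}>0$, $\Lambda>\frac{\|X\|_\infty+1}{2\gamma_{\min}}$ and $T_{\max}\ge\lceil\Lambda\|X\|_\infty\rceil$, then there exist $\bm\lambda\in\{-\Lambda,\dots,\Lambda\}^P$ and $\bm T\in\{-T_{\max},\dots,T_{\max}\}^{M+1}$ with $\mathrm{WNB}(\bm\lambda,\bm T)\ge\mathrm{WNB}(\bm\rho,\bm t)$.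
   Context: Samples $\bm x_j$ are row vectors, so $\bm x_j\bm\lambda$ is a scalar. Weights $\omega_0,\dots,\omega_M\in[0,1]$ with $\sum_i\omega_i=1$ are fixed. For coefficients $\bm\lambda\in\mathbb{R}^P$ and intercepts $\bm T=(T_0,\dots,T_M)$, the weighted net benefit is $\mathrm{WNB}(\bm\lambda,\bm T)=\sum_{i=0}^M\Big(\omega_i\sum_{j=1}^N I(\bm x_j\bm\lambda\ge T_i,\,y_j=1)-\frac{\omega_ip_i}{1-p_i}\sum_{j=1}^N I(\bm x_j\bm\lambda\ge T_i,\,y_j=0)\Big)$, where $I$ is the indicator function. *)

From mathcomp Require Import all_boot all_order all_algebra.
Set Implicit Arguments. Unset Strict Implicit. Unset Printing Implicit Defensive.
Import Order.TTheory GRing.Theory Num.Theory.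
Local Open Scope ring_scope.

Definition dotp (R : ringType) (P : nat) (x lam : 'rV[R]_P) : R :=
  \sum_(k < P) x 0 k * lam 0 k.

Definition WNB (R : realFieldType) (N P M : nat)
  (x : 'I_N -> 'rV[R]_P) (y : 'I_N -> bool)
  (w p : 'I_M.+1 -> R) (lam : 'rV[R]_P) (T : 'I_M.+1 -> R) : R :=
  \sum_(i < M.+1)
    (w i * (#|[set j : 'I_N | (T i <= dotp (x j) lam) && y j]|)%:R
     - w i * p i / (1 - p i) *
         (#|[set j : 'I_N | (T i <= dotp (x j) lam) && ~~ y j]|)%:R).

Definition maxabs (R : realFieldType) (N P : nat) (x : 'I_N -> 'rV[R]_P)
  (rho : 'rV[R]_P) : R := \big[Num.max/0]_(j < N) `|dotp (x j) rho|.

Definition Xinf (R : realFieldType) (N P : nat) (x : 'I_N -> 'rV[R]_P) : R :=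
  \big[Num.max/0]_(j < N) \sum_(k < P) `|x j 0 k|.

Definition vinf (R : realFieldType) (P : nat) (v : 'rV[R]_P) : R :=
  \big[Num.max/0]_(k < P) `|v 0 k|.

(* gamma_min = min_{i,j} |x_j rho - t_i| / ||rho||_inf ; here the samples are
   indexed by 'I_n.+1 (N = n+1 >= 1 samples), so the minimum is over a
   nonempty family; the seed is the (i,j) = (0,0) term itself. *)
Definition gamma_min (R : realFieldType) (n P M : nat) (x : 'I_n.+1 -> 'rV[R]_P)
  (rho : 'rV[R]_P) (t : 'I_M.+1 -> R) : R :=
  let m0 := `|dotp (x ord0) rho - t ord0| in
  (\big[Num.min/m0]_(i < M.+1) \big[Num.min/m0]_(j < n.+1) `|dotp (x j) rho - t i|)
  / vinf rho.

(* Scale rho by s = Lam / ||rho||_inf and t by the same factor, then round every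
   coordinate to the nearest integer.  Rounding moves each score x_j lambda by at
   most ||X||_inf / 2 and each threshold by at most 1/2, while the scaled margin
   between any score and any threshold is at least Lam * gamma_min > (||X||_inf + 1) / 2.
   Hence every sample is classified exactly as before at every threshold, and
   the weighted net benefit is unchanged. *)
From mathcomp Require Import all_boot all_order all_algebra.
From mathcomp Require Import lra.
Import Order.TTheory GRing.Theory Num.Theory.
Set Implicit Arguments.
Unset Strict Implicit.
Unset Printing Implicit Defensive.
Local Open Scope ring_scope.

Section Norms.
Variables (R : realFieldType) (P : nat).
Implicit Types (u v : 'rV[R]_P).

Lemma dotpB u v v' : dotp u (v - v') = dotp u v - dotp u v'.
Proof. by rewrite /dotp -sumrB; apply: eq_bigr => k _; rewrite !mxE mulrBr. Qed.

Lemma dotpZ u (s : R) v : dotp u (s *: v) = s * dotp u v.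
Proof. by rewrite /dotp mulr_sumr; apply: eq_bigr => k _; rewrite mxE mulrCA. Qed.

Lemma norm_dotp_le u v (c : R) :
  (forall k, `|v 0 k| <= c) -> `|dotp u v| <= (\sum_(k < P) `|u 0 k|) * c.
Proof.
move=> vc; apply: le_trans (ler_norm_sum _ _ _) _; rewrite mulr_suml.
by apply: ler_sum => k _; rewrite normrM ler_wpM2l.
Qed.

Lemma vinf_ge v k : `|v 0 k| <= vinf v.
Proof. exact: le_bigmax. Qed.

Lemma vinf_ge0 v : 0 <= vinf v.
Proof. exact: bigmax_ge_id. Qed.

Variable N : nat.
Implicit Type x : 'I_N -> 'rV[R]_P.

Lemma Xinf_ge x j : \sum_(k < P) `|x j 0 k| <= Xinf x.
Proof. exact: le_bigmax. Qed.

Lemma Xinf_ge0 x : 0 <= Xinf x.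
Proof. exact: bigmax_ge_id. Qed.

Lemma maxabs_le x v : maxabs x v <= Xinf x * vinf v.
Proof.
apply: bigmax_le => [|j _]; first by rewrite mulr_ge0 ?Xinf_ge0 ?vinf_ge0.
apply: le_trans (norm_dotp_le _ (vinf_ge v)) _.
by rewrite ler_wpM2r ?vinf_ge0 ?Xinf_ge.
Qed.

Lemma norm_le_maxabs (M : nat) x v (t : 'I_M.+1 -> R) :
  - maxabs x v <= t ord0 -> {homo t : i j / (i <= j)%N >-> i <= j} ->
  t ord_max <= maxabs x v -> forall i, `|t i| <= maxabs x v.
Proof.
move=> t0 tmono tM i; rewrite ler_norml.
rewrite (le_trans t0 (tmono _ _ _)) ?(le_trans (tmono _ _ _) tM) //.
by rewrite -ltnS ltn_ord.
Qed.

End Norms.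

Lemma gamma_min_le (R : realFieldType) (n P M : nat) (x : 'I_n.+1 -> 'rV[R]_P)
    (rho : 'rV[R]_P) (t : 'I_M.+1 -> R) i j :
  gamma_min x rho t * vinf rho <= `|dotp (x j) rho - t i|.
Proof.
rewrite /gamma_min; have [->|V0] := eqVneq (vinf rho) 0; first by rewrite mulr0.
by rewrite divfK //; apply: le_trans (bigmin_le _ i _) _; apply: bigmin_le.
Qed.

Lemma vinf_gt0 (R : realFieldType) (n P M : nat) (x : 'I_n.+1 -> 'rV[R]_P)
    (rho : 'rV[R]_P) (t : 'I_M.+1 -> R) :
  0 < gamma_min x rho t -> 0 < vinf rho.
Proof.
move=> g0; rewrite lt_def vinf_ge0 andbT.
by apply: contraTneq g0; rewrite /gamma_min => ->; rewrite invr0 mulr0 ltxx.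
Qed.

Lemma ler_perturbed (R : realDomainType) (a b a' b' : R) :
  `|a' - a| + `|b' - b| < `|b - a| -> (a' <= b') = (a <= b).
Proof.
move=> H; have := distrC a' a; have := distrC b' b.
have := ler_norm (a' - a); have := ler_norm (a - a').
have := ler_norm (b' - b); have := ler_norm (b - b').
have [ab|ba] := lerP a b.
- by rewrite [`|b - a|]ger0_norm ?subr_ge0 // in H => *; apply/idP; lra.
- by rewrite [`|b - a|]ltr0_norm ?subr_lt0 // in H => *; apply/negbTE; rewrite -ltNge; lra.
Qed.

Lemma eq_WNB (R : realFieldType) (N P M : nat) (x : 'I_N -> 'rV[R]_P) y w p
    (lam lam' : 'rV[R]_P) (T T' : 'I_M.+1 -> R) :
  (forall i j, (T i <= dotp (x j) lam) = (T' i <= dotp (x j) lam')) ->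
  WNB x y w p lam T = WNB x y w p lam' T'.
Proof.
move=> same; apply: eq_bigr => i _.
by congr (_ * _%:R - _ * _%:R); apply: eq_card => j; rewrite !inE same.
Qed.

Section Rounding.
Variable R : archiRealFieldType.

Definition round (r : R) : int := Num.floor (r + 2^-1).

Lemma round_near (r : R) : `|(round r)%:~R - r| <= 2^-1.
Proof.
have lo := floor_le (r + 2^-1).
have hi : r + 2^-1 < (round r + 1)%:~R by rewrite -floor_lt_int ltzD1.
by rewrite intrD in hi; rewrite ler_norml; apply/andP; split; lra.
Qed.

Lemma round_norm_le (r c : R) : `|r| <= c -> `|round r| <= Num.ceil c.
Proof.
rewrite ler_norml => /andP[cr rc]; have := ceil_ge c.
rewrite ler_norml /round => cc; apply/andP; split.
- by rewrite floor_ge_int intrN; lra.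
- by rewrite -ltzD1 floor_lt_int intrD; lra.
Qed.

Lemma dotp_round_near (P : nat) (u v : 'rV[R]_P) (s : R) :
  `|dotp u (\row_k (round (s * v 0 k))%:~R) - s * dotp u v|
    <= (\sum_(k < P) `|u 0 k|) / 2.
Proof.
rewrite -dotpZ -dotpB; apply: norm_dotp_le => k.
by rewrite !mxE; apply: round_near.
Qed.

End Rounding.

Theorem theorem3 (R : archiRealFieldType) (n P M : nat)
  (x : 'I_n.+1 -> 'rV[R]_P) (y : 'I_n.+1 -> bool)
  (w p : 'I_M.+1 -> R)
  (hw : forall i, 0 <= w i <= 1) (hwsum : \sum_(i < M.+1) w i = 1)
  (hp0 : p ord0 = 0)
  (hpinc : forall i j : 'I_M.+1, (i < j)%N -> p i < p j)
  (hp1 : forall i, p i < 1)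
  (rho : 'rV[R]_P) (hrho : rho != 0)
  (t : 'I_M.+1 -> R)
  (ht0 : - maxabs x rho <= t ord0)
  (htinc : forall i j : 'I_M.+1, (i <= j)%N -> t i <= t j)
  (htM : t ord_max <= maxabs x rho)
  (Lam Tmax : nat) (hLam : (0 < Lam)%N) (hTmax : (0 < Tmax)%N)
  (hgam : 0 < gamma_min x rho t)
  (hLamb : (Xinf x + 1) / (2 * gamma_min x rho t) < Lam%:R)
  (hTb : Num.ceil (Lam%:R * Xinf x) <= Tmax%:Z) :
  exists (lam : 'I_P -> int) (T : 'I_M.+1 -> int),
    (forall k, `|lam k| <= Lam%:Z) /\ (forall i, `|T i| <= Tmax%:Z) /\
    WNB x y w p (\row_k (lam k)%:~R) (fun i => (T i)%:~R)
      >= WNB x y w p rho t.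
Proof.
set g := gamma_min x rho t in hgam hLamb.
have V0 : 0 < vinf rho := vinf_gt0 hgam.
set s := Lam%:R / vinf rho.
have s0 : 0 < s by rewrite divr_gt0 ?ltr0n.
have sV : s * vinf rho = Lam%:R by rewrite divfK ?gt_eqF.
have margin : Xinf x + 1 < Lam%:R * (2 * g).
  by move: hLamb; rewrite ltr_pdivrMr // mulr_gt0.
exists (fun k => round (s * rho 0 k)), (fun i => round (s * t i)).
split; [|split].
- move=> k; rewrite -[Lam%:Z](intrKceil (R := R)); apply: round_norm_le.
  by rewrite -pmulrn normrM gtr0_norm // -sV ler_pM2l ?vinf_ge.
- move=> i; apply: le_trans hTb; apply: round_norm_le.
  rewrite normrM gtr0_norm // -sV -(mulrA s) ler_pM2l // mulrC.
  exact: le_trans (norm_le_maxabs ht0 htinc htM i) (maxabs_le x rho).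
- rewrite [X in _ <= X](@eq_WNB _ _ _ _ x y w p _ rho _ t) // => i j.
  have gap : Lam%:R * g <= `|s * dotp (x j) rho - s * t i|.
    rewrite -mulrBr normrM gtr0_norm // -sV -(mulrA s) ler_pM2l // mulrC.
    exact: gamma_min_le.
  rewrite -[t i <= _](ler_pM2l s0); apply: ler_perturbed.
  have := round_near (s * t i); have := dotp_round_near (x j) rho s.
  have := Xinf_ge x j; lra.
Qed.
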